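(* Let $n\in\mathbb{N}_0$ and for $z,w\in\mathbb{C}$ with $z\neq w$ define $$H_n(z,w)=\frac{|z|^{2n}}{|z-w|^{2n}}e^{-\pi(|z|^2-|z-w|^2)}.$$ Let $R>0$, $w=R/2$, and $z=re^{i\varphi}$ with $r\ge R$ and $|\varphi|\le\pi/5$. Then $$H_n(z,w)\le 4^n e^{-\pi R^2/2}.$$
   Context: For $n=0$ the factor $|z|^{2n}/|z-w|^{2n}$ equals $1$. *)

From Stdlib Require Import Reals.
From Coquelicot Require Import Coquelicot.
Open Scope R_scope.

Definition H (n : nat) (z w : C) : R :=
  (Cmod z) ^ (2 * n) / (Cmod (Cminus z w)) ^ (2 * n)
  * exp (- PI * ((Cmod z) ^ 2 - (Cmod (Cminus z w)) ^ 2)).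

(** Write [c = cos phi >= 3/4] and [a = R0/2]. Then [|z|^2 = r^2] and
    [|z - w|^2 = r^2 - 2 a r c + a^2]. Since [r >= R0 = 2a] and [c <= 1],
    [|z - w|^2 - r^2/4 >= (3r - 2a)(r - 2a)/4 >= 0], so the ratio factor is at
    most [4^n]; since [c >= 3/4], [|z|^2 - |z - w|^2 = 2 a r c - a^2 >= R0^2/2],
    which bounds the exponential factor. *)

From Stdlib Require Import Reals Lra.
From Coquelicot Require Import Coquelicot.
Open Scope R_scope.

(* Two steps of Leibniz's series: [PI/4 <= 1 - 1/3 + 1/5]. *)
Lemma PI_le_52_15 : PI <= 52 / 15.
Proof.
  pose proof (Alt_PI_ineq 1) as [_ Hle].
  rewrite Alt_PI_eq in Hle.
  simpl in Hle; unfold tg_alt, PI_tg in Hle; simpl in Hle.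
  lra.
Qed.

Lemma cos_ge_1_sub_sqr_half (x : R) : Rabs x <= 2 -> 1 - x ^ 2 / 2 <= cos x.
Proof.
  intros Hx.
  apply Rabs_le_between in Hx as [Hlo Hhi].
  destruct (pre_cos_bound x 0 Hlo Hhi) as [Hcos _].
  unfold cos_approx, cos_term in Hcos; simpl in Hcos.
  lra.
Qed.

Lemma cos_ge_3_4 (phi : R) : Rabs phi <= PI / 5 -> 3 / 4 <= cos phi.
Proof.
  intros Hphi.
  pose proof PI_le_52_15. pose proof PI_RGT_0.
  assert (Hsqr : phi ^ 2 <= (52 / 75) ^ 2).
  { rewrite <- (pow2_abs phi). apply pow_incr. split; [apply Rabs_pos | lra]. }
  pose proof (cos_ge_1_sub_sqr_half phi ltac:(lra)).
  lra.
Qed.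

Lemma Cmod_polar_sqr (r phi : R) : Cmod (RtoC r * (cos phi, sin phi)) ^ 2 = r ^ 2.
Proof.
  rewrite Cmod2_alt; simpl.
  pose proof (sin2_cos2 phi) as Hpyth; unfold Rsqr in Hpyth.
  nra.
Qed.

Lemma Cmod_polar_sub_real_sqr (r phi a : R) :
  Cmod (RtoC r * (cos phi, sin phi) - RtoC a) ^ 2
  = r ^ 2 - 2 * a * r * cos phi + a ^ 2.
Proof.
  rewrite Cmod2_alt; simpl.
  pose proof (sin2_cos2 phi) as Hpyth; unfold Rsqr in Hpyth.
  nra.
Qed.

Lemma H_le (n : nat) (z w : C) (q d : R) :
  z <> w ->
  Cmod z ^ 2 <= q * Cmod (z - w) ^ 2 ->
  d <= Cmod z ^ 2 - Cmod (z - w) ^ 2 ->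
  H n z w <= q ^ n * exp (- PI * d).
Proof.
  intros Hzw Hratio Hexp.
  assert (Hpos : 0 < Cmod (z - w) ^ 2).
  { apply pow_lt, Cmod_gt_0, Cminus_eq_contra, Hzw. }
  unfold H, Rdiv at 1.
  rewrite !pow_mult, <- pow_inv, <- Rpow_mult_distr.
  apply Rmult_le_compat.
  - apply pow_le, Rdiv_le_0_compat; [apply pow2_ge_0 | lra].
  - apply Rlt_le, exp_pos.
  - apply pow_incr. split.
    + apply Rdiv_le_0_compat; [apply pow2_ge_0 | lra].
    + apply Rle_div_l; lra.
  - assert (Hle : - PI * (Cmod z ^ 2 - Cmod (z - w) ^ 2) <= - PI * d)
      by (pose proof PI_RGT_0; nra).
    destruct (Rle_lt_or_eq_dec _ _ Hle) as [Hlt | ->].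
    + left. apply exp_increasing, Hlt.
    + right. reflexivity.
Qed.

Theorem lemma2 (n : nat) (R0 r phi : R) :
  0 < R0 -> R0 <= r -> Rabs phi <= PI / 5 ->
  let z : C := Cmult (RtoC r) (cos phi, sin phi) in
  let w : C := RtoC (R0 / 2) in
  H n z w <= 4 ^ n * exp (- PI * R0 ^ 2 / 2).
Proof.
  intros HR0 Hr Hphi z w.
  pose proof (cos_ge_3_4 phi Hphi) as Hcos_lo.
  pose proof (COS_bound phi) as [_ Hcos_hi].
  pose proof (Cmod_polar_sqr r phi) as Hz.
  pose proof (Cmod_polar_sub_real_sqr r phi (R0 / 2)) as Hzw.
  fold z w in Hz, Hzw.
  assert (Hfar : r ^ 2 / 4 <= Cmod (z - w) ^ 2).
  { assert (0 <= r * R0 * (1 - cos phi)) by (apply Rmult_le_pos; nra).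
    assert (0 <= (3 * r - R0) * (r - R0)) by (apply Rmult_le_pos; lra).
    nra. }
  replace (- PI * R0 ^ 2 / 2) with (- PI * (R0 ^ 2 / 2)) by field.
  apply H_le.
  - intros Heq. apply Ceq_minus in Heq. rewrite Heq, Cmod_0 in Hfar. nra.
  - lra.
  - assert (R0 * (3 / 4) <= r * cos phi) by (apply Rmult_le_compat; lra).
    nra.
Qed.
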